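(* Let $r\geq 3$ be an integer and let $x,y$ be distinct vertices of a graph $G$. If $G$ contains an $r$-compatible set of four $xy$-paths, then $G$ contains $C_{2,r}$ as an immersion.
   Context: All graphs are finite and loopless but may have parallel edges. An $xy$-path is a path with ends $x$ and $y$, written starting at $x$. Two edge-disjoint $xy$-paths $Q_1=x_1,\ldots,x_s$ and $Q_2=y_1,\ldots,y_t$ are aligned if for every two internal vertices $u=x_{i_1}=y_{j_1}$, $v=x_{i_2}=y_{j_2}$ common to both, $(i_1-i_2)(j_1-j_2)>0$. A set of pairwise edge-disjoint $xy$-paths is $r$-compatible if some two of the paths are aligned and intersect in at least $r$ vertices (counting $x$ and $y$). Lifting a pair of adjacent edges $uv,vw$ means deleting them and adding a new edge $uw$ (if $u=w$ the loop is deleted). A graph $H$ is an immersion of $G$ if a graph isomorphic to $H$ can be obtained from a subgraph of $G$ by repeatedly lifting pairs of edges; equivalently, there is an injective map $V(H)\to V(G)$ and pairwise edge-disjoint paths of $G$ joining the images of the ends of each edge of $H$. $C_{t,r}$ denotes the graph obtained from a cycle on $r$ vertices by replacing each edge by $t$ parallel edges. *)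

From HB Require Import structures.
From mathcomp Require Import all_boot all_order all_algebra.
Set Implicit Arguments. Unset Strict Implicit. Unset Printing Implicit Defensive.
Import GRing.Theory Num.Theory.

(* Finite multigraphs: a finite vertex type, a finite edge type, and for each
   edge its (unordered) pair of ends, given as an ordered pair. Parallel edges
   are allowed; looplessness is a separate predicate. *)
Record mgraph := MGraph {
  vert : finType;
  edge : finType;
  ends : edge -> vert * vert }.

Definition loopless (G : mgraph) : Prop :=
  forall e : edge G, (ends e).1 != (ends e).2.

Definition joins (G : mgraph) (e : edge G) (u v : vert G) : bool :=
  (ends e == (u, v)) || (ends e == (v, u)).

(* A path is given by its vertex sequence and its edge sequence:
   vertices v_0 ... v_s (pairwise distinct), edges e_1 ... e_s, e_i joins v_{i-1} v_i. *)
Definition gpath (G : mgraph) := (seq (vert G) * seq (edge G))%type.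

Definition is_path (G : mgraph) (x y : vert G) (P : gpath G) : Prop :=
  [/\ size P.1 = (size P.2).+1,
      uniq P.1,
      head y P.1 = x,
      last x P.1 = y &
      all (fun p => joins p.1 p.2.1 p.2.2) (zip P.2 (zip P.1 (behead P.1)))].

Definition edge_disjoint (G : mgraph) (P Q : gpath G) : bool :=
  all (fun e => e \notin Q.2) P.2.

Definition internal (G : mgraph) (x y : vert G) (P : gpath G) (v : vert G) : bool :=
  [&& v \in P.1, v != x & v != y].

(* aligned xy-paths: positions (indices) of distinct common internal vertices
   have the same order in both paths, i.e. (i1 - i2)(j1 - j2) > 0. *)
Definition aligned (G : mgraph) (x y : vert G) (P Q : gpath G) : Prop :=
  forall u v : vert G, u != v ->
    internal x y P u -> internal x y Q u ->
    internal x y P v -> internal x y Q v ->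
    (0 < ((index u P.1)%:Z - (index v P.1)%:Z) * ((index u Q.1)%:Z - (index v Q.1)%:Z))%R.

(* number of vertices common to two paths (including the ends) *)
Definition n_common (G : mgraph) (P Q : gpath G) : nat :=
  #|[set v : vert G | (v \in P.1) && (v \in Q.1)]|.

Definition immersion (H G : mgraph) : Prop :=
  exists f : vert H -> vert G, injective f /\
  exists P : edge H -> gpath G,
    (forall e, is_path (f (ends e).1) (f (ends e).2) (P e)) /\
    (forall e1 e2, e1 != e2 -> edge_disjoint (P e1) (P e2)).

(* C_{t,r}: the cycle on vertices 'I_r (edges {i, i+1 mod r}), each edge
   replaced by t parallel edges. *)
Definition Ctr (t r : nat) : mgraph :=
  @MGraph 'I_r ('I_r * 'I_t)%type
          (fun e => (e.1, ordS e.1)).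

From HB Require Import structures.
From mathcomp Require Import all_boot all_order all_algebra.
From mathcomp Require Import zify.
Set Implicit Arguments. Unset Strict Implicit. Unset Printing Implicit Defensive.

(* Let P1, P2 be the two aligned paths and P3, P4 the other two.  Choose r vertices
   x = v_0, ..., v_(r-1) = y common to P1 and P2, in their order along P1; alignment
   says they occur in the same order along P2.  The segments of P1 and of P2 between
   v_i and v_(i+1) give the two parallel edges v_i v_(i+1) of C_(2,r), and P3, P4
   reversed give the two edges y x.  Segments of one path over disjoint index ranges
   share no edge, and segments of different paths share none because the four paths
   are edge-disjoint. *)

Lemma mem_take_drop_nth (T : eqType) (s : seq T) a n z : z \in take n (drop a s) ->
  exists k, [/\ a <= k, k < a + n, k < size s & nth z s k = z].
Proof.
case/(nthP z) => i; rewrite size_take_min size_drop => Hi Ei.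
exists (a + i); split; try lia.
by rewrite -{2}Ei nth_take ?nth_drop //; lia.
Qed.

Section Paths.
Variable G : mgraph.
Implicit Types (x y z u v : vert G) (P : gpath G) (e : edge G).

Lemma joinsC e u v : joins e u v = joins e v u.
Proof. by rewrite /joins orbC. Qed.

Lemma joins_endpoint e u v u' v' : joins e u v -> joins e u' v' -> (u == u') || (u == v').
Proof.
by rewrite /joins => /orP[] /eqP-> /orP[] /eqP[] <- <-; rewrite eqxx ?orbT.
Qed.

Lemma all_joins_nthP z (vs : seq (vert G)) (es : seq (edge G)) :
  size vs = (size es).+1 ->
  reflect (forall e0 k, k < size es -> joins (nth e0 es k) (nth z vs k) (nth z vs k.+1))
          (all (fun p => joins p.1 p.2.1 p.2.2) (zip es (zip vs (behead vs)))).
Proof.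
move=> Hs; have Hz : size (zip vs (behead vs)) = size es.
  by rewrite size_zip size_behead Hs /=; lia.
apply: (iffP idP) => [/all_nthP Ha e0 k Hk | Ha].
  have := Ha (e0, (z, z)) k; rewrite size_zip Hz minnn nth_zip // nth_zip_cond Hz Hk.
  by rewrite nth_behead => /(_ isT).
case: es Hs Hz Ha => [|e0 es] Hs Hz Ha; first by case: (zip vs (behead vs)).
apply/(all_nthP (e0, (z, z))) => k; rewrite size_zip Hz minnn => Hk.
by rewrite nth_zip // nth_zip_cond Hz Hk nth_behead Ha.
Qed.

Lemma is_path_nth z x y P :
  is_path x y P <->
  [/\ size P.1 = (size P.2).+1, uniq P.1, nth z P.1 0 = x, nth z P.1 (size P.2) = y &
      forall e0 k, k < size P.2 -> joins (nth e0 P.2 k) (nth z P.1 k) (nth z P.1 k.+1)].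
Proof.
case: P => vs es /=; split=> [[Hs Hu Hh Hl /(all_joins_nthP z Hs) Ha] | [Hs Hu Hh Hl Ha]].
  split=> //; first by case: vs Hs Hh {Hu Hl Ha}.
  by rewrite -Hl -nth_last Hs; apply: set_nth_default; rewrite Hs.
split=> //; first by case: vs Hs Hh {Hu Hl Ha}.
  by rewrite -nth_last Hs /= -Hl; apply: set_nth_default; rewrite Hs.
exact/(all_joins_nthP z Hs).
Qed.

Definition subpath P (a b : nat) : gpath G :=
  (take (b - a).+1 (drop a P.1), take (b - a) (drop a P.2)).

Definition rev_path P : gpath G := (rev P.1, rev P.2).

Lemma is_path_subpath x y P a b : is_path x y P -> a <= b <= size P.2 ->
  is_path (nth x P.1 a) (nth x P.1 b) (subpath P a b).
Proof.
move=> /(is_path_nth x)[Hs Hu _ _ Ha] /andP[Hab Hb].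
have Hs2 : size (subpath P a b).2 = b - a by rewrite size_take_min size_drop; lia.
apply/(is_path_nth x); rewrite Hs2 /=; split.
- by rewrite size_take_min size_drop Hs; lia.
- exact/take_uniq/drop_uniq.
- by rewrite nth_take // nth_drop addn0.
- by rewrite nth_take // nth_drop subnKC.
move=> e0 k Hk; rewrite !nth_take //; last by rewrite ltnS ltnW.
by rewrite !nth_drop addnS Ha //; lia.
Qed.

Lemma is_path_rev x y P : is_path x y P -> is_path y x (rev_path P).
Proof.
move=> /(is_path_nth x)[Hs Hu Hh Hl Ha]; apply/(is_path_nth x); rewrite /= !size_rev.
split.
- by [].
- by rewrite rev_uniq.
- by rewrite nth_rev Hs // subn1.
- by rewrite nth_rev Hs // subnn.
move=> e0 k Hk; rewrite !nth_rev ?Hs // ?ltnS 1?ltnW // joinsC.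
have -> : (size P.2).+1 - k.+2 = size P.2 - k.+1 by lia.
have -> : (size P.2).+1 - k.+1 = (size P.2 - k.+1).+1 by lia.
by rewrite Ha //; lia.
Qed.

Lemma mem_subpath_edge P a b e : e \in (subpath P a b).2 ->
  exists k, [/\ a <= k, k < b, k < size P.2 & nth e P.2 k = e].
Proof.
move=> /mem_take_drop_nth[k [Hak Hkb Hk Ek]]; exists k; split=> //; lia.
Qed.

Lemma subpath_edges_sub P a b : {subset (subpath P a b).2 <= P.2}.
Proof. by move=> e /mem_take /mem_drop. Qed.

Lemma is_path_uniq_edges x y P : is_path x y P -> uniq P.2.
Proof.
move=> /(is_path_nth x)[Hs Hu _ _ Ha]; case E: P.2 => [//|e0 es]; rewrite -E.
apply/(uniqP e0) => i j; rewrite !inE => Hi Hj Eij.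
have vert_inj k l : nth x P.1 k = nth x P.1 l -> k <= size P.2 -> l <= size P.2 -> k = l.
  by move=> Ekl Hk Hl; apply/eqP; rewrite -(nth_uniq x _ _ Hu) ?Hs ?ltnS // Ekl.
wlog lt_ij : i j Hi Hj Eij / i < j.
  move=> IH; case: (ltngtP i j) => [/IH|/(IH j i Hj Hi (esym Eij))|] //; exact.
have := Ha e0 j Hj; rewrite -Eij => /(joins_endpoint (Ha e0 i Hi)).
case/orP => /eqP /vert_inj Eij'; first exact: Eij' (ltnW Hi) (ltnW Hj).
by have := Eij' (ltnW Hi) Hj; lia.
Qed.

Lemma edge_disjointC P Q : edge_disjoint P Q = edge_disjoint Q P.
Proof.
by apply/allP/allP => H e eQ; apply: contraL eQ => eP; apply: H.
Qed.

Lemma edge_disjoint_sub P Q P' Q' : {subset P'.2 <= P.2} -> {subset Q'.2 <= Q.2} ->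
  edge_disjoint P Q -> edge_disjoint P' Q'.
Proof.
move=> sP sQ /allP PQ; apply/allP => e /sP /PQ; apply: contra; exact: sQ.
Qed.

Lemma edge_disjoint_subpath x y P a1 b1 a2 b2 : is_path x y P -> b1 <= a2 ->
  edge_disjoint (subpath P a1 b1) (subpath P a2 b2).
Proof.
move=> /is_path_uniq_edges Pu le12; apply/allP => e /mem_subpath_edge[k1 [_ lt1 Hk1 E1]].
apply/negP => /mem_subpath_edge[k2 [le2 _ Hk2 E2]].
have : k1 = k2 by apply/eqP; rewrite -(nth_uniq e Hk1 Hk2 Pu) E1 E2.
lia.
Qed.

Lemma index_path_source x y P : is_path x y P -> index x P.1 = 0.
Proof. by case: P => [[|v vs] es] [//= _ _ ->]; rewrite eqxx. Qed.

Lemma index_path_target x y P : is_path x y P -> index y P.1 = size P.2.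
Proof. by move=> /(is_path_nth x)[Hs Hu _ <- _]; rewrite index_uniq ?Hs. Qed.

Lemma mem_path_source x y P : is_path x y P -> x \in P.1.
Proof. by case: P => [[|v vs] es] [//= _ _ ->]; rewrite mem_head. Qed.

Lemma mem_path_target x y P : is_path x y P -> y \in P.1.
Proof. by move=> /(is_path_nth x)[Hs _ _ <- _]; rewrite mem_nth ?Hs. Qed.

Lemma index_path_le x y P v : is_path x y P -> v \in P.1 -> index v P.1 <= size P.2.
Proof. by move=> /(is_path_nth x)[Hs _ _ _ _]; rewrite -index_mem Hs. Qed.

Lemma aligned_index_lt x y P1 P2 u v :
  is_path x y P1 -> is_path x y P2 -> aligned x y P1 P2 ->
  u \in P1.1 -> v \in P1.1 -> u \in P2.1 -> v \in P2.1 ->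
  index u P1.1 < index v P1.1 -> index u P2.1 < index v P2.1.
Proof.
move=> p1 p2 al u1 v1 u2 v2 lt1.
have uv : u != v by apply: contraTneq lt1 => ->; rewrite ltnn.
have index_inj2 w w' : w \in P2.1 -> w' \in P2.1 -> index w P2.1 = index w' P2.1 -> w = w'.
  exact: index_inj.
case: (eqVneq u x) => [eux | ux].
  rewrite eux (index_path_source p2) lt0n; apply: contra_neq uv => ev.
  by rewrite eux (index_inj2 v x) // ?(index_path_source p2) // -eux.
case: (eqVneq v y) => [evy | vy].
  rewrite evy (index_path_target p2) ltn_neqAle (index_path_le p2 u2) andbT.
  by apply: contra_neq uv => eu; rewrite evy (index_inj2 u y) // ?(index_path_target p2) // -evy.
case: (eqVneq u y) => [euy | uy].
  by move: lt1; rewrite euy (index_path_target p1) ltnNge (index_path_le p1 v1).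
case: (eqVneq v x) => [evx | vx].
  by move: lt1; rewrite evx (index_path_source p1).
move: (al u v uv); rewrite /internal u1 v1 u2 v2 ux uy vx vy.
by move=> /(_ isT isT isT isT); move: lt1; clear; nia.
Qed.

Lemma common_vertex_chain x y P1 P2 r : 1 < r -> is_path x y P1 -> is_path x y P2 ->
  r <= n_common P1 P2 ->
  exists f : nat -> vert G, [/\ f 0 = x, f r.-1 = y,
    forall i, i < r -> (f i \in P1.1) && (f i \in P2.1) &
    forall i j, i < j < r -> index (f i) P1.1 < index (f j) P1.1].
Proof.
move=> r_gt1 p1 p2 common; have /(is_path_nth x)[Hs Hu Hh Hl _] := p1.
pose I := [seq k <- iota 0 (size P1.1) | nth x P1.1 k \in P2.1].
have I_sorted : sorted ltn I by apply: sorted_filter; [exact: ltn_trans | exact: iota_ltn_sorted].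
have I_size : r <= size I.
  rewrite (leq_trans common) // /I -(size_map (nth x P1.1)) -filter_map.
  rewrite -/(mkseq _ _) mkseq_nth -(card_uniqP (filter_uniq _ Hu)).
  by apply/subset_leq_card/subsetP => v; rewrite inE mem_filter andbC.
have I_bound k : k \in I -> k <= size P1.2 by rewrite mem_filter mem_iota Hs => /andP[_].
have I_common k : k \in I -> nth x P1.1 k \in P2.1 by rewrite mem_filter => /andP[].
have I_head : nth 0 I 0 = 0 by rewrite /I Hs /= Hh (mem_path_source p2).
clearbody I.
pose g i := if i < r.-1 then nth 0 I i else size P1.2.
have g_bound i : g i <= size P1.2.
  by rewrite /g; case: ifP => // lt_i; apply/I_bound/mem_nth/(leq_trans _ I_size); lia.
have g_lt i j : i < j < r -> g i < g j.
  move=> /andP[lt_ij lt_jr]; have lt_ir : i < r.-1 by lia.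
  have nthI_lt k l : k < l < r -> nth 0 I k < nth 0 I l.
    by move=> /andP[? ?]; apply: (sorted_ltn_nth ltn_trans) => //; rewrite inE; lia.
  rewrite /g lt_ir; case: ifP => [_ | _]; first by apply: nthI_lt; lia.
  have lt_last : r.-1 < size I by apply: (leq_trans _ I_size); lia.
  by apply: leq_trans (I_bound _ (mem_nth 0 lt_last)); apply: nthI_lt; lia.
exists (fun i => nth x P1.1 (g i)); split.
- by rewrite /g ifT ?I_head //; lia.
- by rewrite /g ltnn.
- move=> i lt_ir; rewrite mem_nth ?Hs ?ltnS ?g_bound //= /g.
  case: ifP => [lt_i | _]; last by rewrite Hl (mem_path_target p2).
  by apply/I_common/mem_nth/(leq_trans _ I_size); lia.
- by move=> i j /g_lt; rewrite !index_uniq // Hs ltnS.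
Qed.
End Paths.

Lemma ordS_val r (i : 'I_r) : ordS i = (if i < r.-1 then i.+1 else 0) :> nat.
Proof.
rewrite /=; case: ifP => lt_i; first by rewrite modn_small //; lia.
have -> : i.+1 = r by have := ltn_ord i; lia.
exact: modnn.
Qed.

Lemma ord2_cases (b : 'I_2) : b = ord0 \/ b = ord_max.
Proof. by case: b => [[|[|//]] ?]; [left | right]; apply: val_inj. Qed.

(* Q (false, b) is the b-th aligned path and Q (true, b) the b-th remaining one; f i is
   the image of vertex i of C_(2,r). *)
Section ImmersionFromChain.
Variables (G : mgraph) (x y : vert G) (r : nat) (Q : bool * 'I_2 -> gpath G).
Variable f : nat -> vert G.
Hypothesis Qpath : forall p, is_path x y (Q p).
Hypothesis Qdisj : forall p q, p != q -> edge_disjoint (Q p) (Q q).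
Hypothesis Qaligned : aligned x y (Q (false, ord0)) (Q (false, ord_max)).
Hypothesis f0 : f 0 = x.
Hypothesis f_last : f r.-1 = y.
Hypothesis f_common :
  forall i, i < r -> (f i \in (Q (false, ord0)).1) && (f i \in (Q (false, ord_max)).1).
Hypothesis f_index_lt :
  forall i j, i < j < r -> index (f i) (Q (false, ord0)).1 < index (f j) (Q (false, ord0)).1.

Definition cut (b : 'I_2) i := index (f i) (Q (false, b)).1.

Definition piece (e : 'I_r * 'I_2) : gpath G :=
  if e.1 < r.-1 then subpath (Q (false, e.2)) (cut e.2 e.1) (cut e.2 e.1.+1)
  else rev_path (Q (true, e.2)).

Lemma mem_lane b i : i < r -> f i \in (Q (false, b)).1.
Proof. by move/f_common/andP=> [f1 f2]; case: (ord2_cases b) => ->. Qed.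

Lemma cut_lt b i j : i < j < r -> cut b i < cut b j.
Proof.
move=> ijr; have ir : i < r by lia.
have jr : j < r by lia.
case: (ord2_cases b) => ->; first exact: f_index_lt.
by apply: (aligned_index_lt (Qpath _) (Qpath _) Qaligned) (f_index_lt ijr); apply: mem_lane.
Qed.

Lemma cut_mono b i j : i <= j < r -> cut b i <= cut b j.
Proof. by case: (ltngtP i j) => [lt_ij | //= | ->] jr; [apply/ltnW/cut_lt; lia |]. Qed.

Lemma cut_le b i : i < r -> cut b i <= size (Q (false, b)).2.
Proof. by move=> ir; apply: index_path_le (Qpath _) (mem_lane b ir). Qed.

Lemma is_path_piece (e : edge (Ctr 2 r)) :
  is_path (f (ends e).1) (f (ends e).2) (piece e).
Proof.
case: e => i b; rewrite /piece ordS_val /=; case: ltnP => [lt_i | ge_i].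
  have nth_cut j : j < r -> nth x (Q (false, b)).1 (cut b j) = f j.
    by move=> jr; rewrite nth_index ?mem_lane.
  rewrite -(nth_cut i) -?(nth_cut i.+1); try lia.
  apply: is_path_subpath (Qpath _) _; by rewrite cut_mono ?cut_le //; lia.
have -> : i = r.-1 :> nat by have := ltn_ord i; lia.
by rewrite f0 f_last; apply: is_path_rev.
Qed.

Lemma edge_disjoint_piece (e1 e2 : edge (Ctr 2 r)) :
  e1 != e2 -> edge_disjoint (piece e1) (piece e2).
Proof.
pose src (e : 'I_r * 'I_2) := (~~ (e.1 < r.-1), e.2).
have piece_sub e : {subset (piece e).2 <= (Q (src e)).2}.
  by rewrite /piece /src; case: ifP => _ z; [apply: subpath_edges_sub | rewrite mem_rev].
move=> ne12; case: (eqVneq (src e1) (src e2)) => [Esrc | ]; last first.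
  by move/Qdisj; apply: edge_disjoint_sub.
have chain_disjoint b i j : i < j < r.-1 ->
    edge_disjoint (subpath (Q (false, b)) (cut b i) (cut b i.+1))
                  (subpath (Q (false, b)) (cut b j) (cut b j.+1)).
  by move=> ijr; apply: edge_disjoint_subpath (Qpath _) _; apply: cut_mono; lia.
move: e1 e2 ne12 Esrc => [i1 b] [i2 b2] ne12 [+ Eb]; subst b2; rewrite /piece /=.
case: (ltnP i1 r.-1) => [lt1 | ge1]; case: (ltnP i2 r.-1) => [lt2 | ge2] // _.
  case: (ltngtP i1 i2) => [lt12 | lt21 | /val_inj Ei]; last by rewrite Ei eqxx in ne12.
  - by apply: chain_disjoint; rewrite lt12.
  - by rewrite edge_disjointC; apply: chain_disjoint; rewrite lt21.
suff Ei : i1 = i2 by rewrite Ei eqxx in ne12.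
by apply: ord_inj; have := ltn_ord i1; have := ltn_ord i2; lia.
Qed.

Lemma chain_inj : injective (fun i : 'I_r => f i).
Proof.
move=> i j Efij; apply: val_inj; case: (ltngtP i j) => // lt_ij.
- by have := @f_index_lt i j; rewrite Efij ltnn lt_ij ltn_ord => /(_ isT).
- by have := @f_index_lt j i; rewrite Efij ltnn lt_ij ltn_ord => /(_ isT).
Qed.

Lemma immersion_of_chain : immersion (Ctr 2 r) G.
Proof.
exists (fun i : 'I_r => f i); split; first exact: chain_inj.
by exists piece; split; [apply: is_path_piece | apply: edge_disjoint_piece].
Qed.
End ImmersionFromChain.

Lemma immersion_C2r (G : mgraph) (x y : vert G) r (Q : bool * 'I_2 -> gpath G) :
  1 < r ->
  (forall p, is_path x y (Q p)) ->
  (forall p q, p != q -> edge_disjoint (Q p) (Q q)) ->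
  aligned x y (Q (false, ord0)) (Q (false, ord_max)) ->
  r <= n_common (Q (false, ord0)) (Q (false, ord_max)) ->
  immersion (Ctr 2 r) G.
Proof.
move=> r_gt1 Qpath Qdisj al common.
have [f [f0 f_last f_common f_lt]] := common_vertex_chain r_gt1 (Qpath _) (Qpath _) common.
exact: immersion_of_chain Qpath Qdisj al f0 f_last f_common f_lt.
Qed.

Lemma ord4_extend_pair (i j : 'I_4) : i != j ->
  exists tau : bool * 'I_2 -> 'I_4,
    [/\ injective tau, tau (false, ord0) = i & tau (false, ord_max) = j].
Proof.
move=> ij; have ji : j != i by rewrite eq_sym.
have : 1 < #|[set~ i] :\ j|.
  by rewrite -(ltn_add2l (j \in [set~ i])) -cardsD1 cardsC1 card_ord !inE ji.
case/card_gt1P => l [k [+ + lk]]; rewrite !inE => /andP[lj li] /andP[kj ki].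
pose tau (p : bool * 'I_2) := if p.1 then (if p.2 == ord0 then k else l)
                              else (if p.2 == ord0 then i else j).
pose untau m : bool * 'I_2 := if m == i then (false, ord0) else if m == j then (false, ord_max)
                else if m == k then (true, ord0) else (true, ord_max).
exists tau; split => //; apply: (can_inj (g := untau)) => -[c b].
case: (ord2_cases b) => ->; case: c; rewrite /tau /untau /= ?eqxx //.
all: by rewrite ?(negbTE ki) ?(negbTE kj) ?(negbTE li) ?(negbTE lj) ?(negbTE lk) ?(negbTE ji).
Qed.

Theorem mainTheorem13 (r : nat) (G : mgraph) (x y : vert G) :
  (3 <= r)%N -> loopless G -> x != y ->
  (exists P : 'I_4 -> gpath G,
     (forall i, is_path x y (P i)) /\
     (forall i j, i != j -> edge_disjoint (P i) (P j)) /\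
     (exists i j, [/\ i != j, aligned x y (P i) (P j) & (r <= n_common (P i) (P j))%N])) ->
  immersion (Ctr 2 r) G.
Proof.
move=> r_ge3 _ _ [Q [Qpath [Qdisj [i [j [ij al common]]]]]].
have [tau [tau_inj tau_i tau_j]] := ord4_extend_pair ij.
apply: (@immersion_C2r G x y r (Q \o tau)) => /=; rewrite ?tau_i ?tau_j //.
- exact: leq_trans r_ge3.
- by move=> p q /(contra_neq (@tau_inj p q)) /Qdisj.
Qed.
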